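(* Consider the ring network, traffic model and shortest-path routing described in the context, and fix a wavelength $\lambda\in\{1,\ldots,\Lambda\}$. For every $n\in\{0,\ldots,N-1\}$, \[ \mathbb{P}\big(\overset{\curvearrowright}{n}_{\lambda}\big)=\mathbb{P}\big(\overset{\curvearrowright}{(\lceil n\rceil_{\lambda})}_{\lambda}\big)-\mathbb{P}\big(S\in\{n,\ldots,\lceil n\rceil_{\lambda}-1\},\ \mathcal{G}_{\lambda}\neq S\big), \] where $\lceil n\rceil_\lambda:=\left\lceil \frac{n-\lambda}{\Lambda}\right\rceil\Lambda+\lambda$ (node and segment indices modulo $N$; the set $\{n,\ldots,\lceil n\rceil_\lambda-1\}$ is empty if $n=\lceil n\rceil_\lambda$). In particular, the utilization of any segment on $\lambda$ is at most that of the segment $u_{\lceil n\rceil_\lambda}$ leading into the next node homed on $\lambda$.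
   Context: Network: a bidirectional ring with $N$ nodes labeled $1,\ldots,N$ in clockwise order; node labels are taken modulo $N$, so node $N$ is also called node $0$. There are $\Lambda$ wavelength channels $1,\ldots,\Lambda$ in each ring direction, and $\eta:=N/\Lambda$ is a positive integer. Node $n$ receives (is homed) on wavelength $\lambda$ iff $n\in\mathcal{M}_\lambda:=\{\lambda+k\Lambda: k=0,\ldots,\eta-1\}$. For $1\le n\le N$, $u_n$ denotes the clockwise ring segment from node $n-1$ to node $n$. Node $N$ is the hotspot. Traffic: each packet has a sender $S$ and a destination (fanout) set $\mathcal{F}\subset\{1,\ldots,N\}\setminus\{S\}$, generated as follows, with $\alpha,\beta,\gamma\ge 0$, $\alpha+\beta+\gamma=1$. With probability $\alpha$ (uniform traffic): $S$ is uniform on $\{1,\ldots,N\}$, a fanout $l\in\{1,\ldots,N-1\}$ is drawn from a distribution $(\mu_l)$, and $\mathcal{F}$ is uniform among $l$-subsets of $\{1,\ldots,N\}\setminus\{S\}$. With probability $\beta$ (hotspot destination traffic): $S$ is uniform on $\{1,\ldots,N-1\}$, $l$ is drawn from $(\nu_l)$, and $\mathcal{F}=\mathcal{F}'\cup\{N\}$ with $\mathcal{F}'$ uniform among $(l-1)$-subsets of $\{1,\ldots,N-1\}\setminus\{S\}$. With probability $\gamma$ (hotspot source traffic): $S=N$, $l$ is drawn from $(\kappa_l)$, and $\mathcal{F}$ is uniform among $l$-subsets of $\{1,\ldots,N-1\}$. $\mathbb{P}$ denotes the probability measure of this model. Shortest-path routing on wavelength $\lambda$: let $\mathcal{F}_\lambda:=\mathcal{F}\cap\mathcal{M}_\lambda$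 and $\mathcal{A}_\lambda:=\mathcal{F}_\lambda\cup\{S\}$. The ''gaps'' are the clockwise arcs between cyclically consecutive nodes of $\mathcal{A}_\lambda$ (if $\mathcal{A}_\lambda=\{X_1<\dots<X_{\ell+1}\}$, their lengths are $X_1+N-X_{\ell+1}$ and $X_{i}-X_{i-1}$). A largest gap is chosen, uniformly at random among ties ($CLG_\lambda$), and $\mathcal{G}_\lambda\in\{0,\ldots,N-1\}$ denotes the node at which $CLG_\lambda$ starts (clockwise). The packet is sent on $\lambda$ from $S$ clockwise up to $\mathcal{G}_\lambda$ and counterclockwise up to the node ending $CLG_\lambda$, so exactly the segments outside $CLG_\lambda$ are traversed. The event $\overset{\curvearrowright}{n}_{\lambda}$ means that segment $u_n$ is traversed clockwise on wavelength $\lambda$, i.e., $u_n$ lies on the clockwise arc from $S$ to $\mathcal{G}_\lambda$. *)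

From mathcomp Require Import all_boot all_order all_algebra.
Set Implicit Arguments. Unset Strict Implicit. Unset Printing Implicit Defensive.
Import Order.TTheory GRing.Theory Num.Theory.
Local Open Scope ring_scope.

(* Nodes: node label n in {1,..,N} is represented by n mod N in 'I_N,
   so node N (the hotspot) is the ordinal 0. *)
Section Ring.
Variables (N Lam : nat).

Definition homed (lam : nat) (x : 'I_N) : bool := (x %% Lam == lam %% Lam)%N.

(* clockwise distance from node a to node b (indices mod N) *)
Definition cwd (a b : nat) : nat := ((b %% N) + N - (a %% N)) %% N.

Definition Aset (lam : nat) (S : 'I_N) (F : {set 'I_N}) : {set 'I_N} :=
  S |: [set x in F | homed lam x].

(* length of the gap starting (clockwise) at a \in A: distance to the next
   element of A clockwise, or N if A = {a} *)
Definition gaplen lam S F (a : 'I_N) : nat :=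
  \big[minn/N]_(b in Aset lam S F | b != a) cwd a b.

Definition maxgap lam S F : nat := \max_(a in Aset lam S F) gaplen lam S F a.

Definition largest_gaps lam S F : {set 'I_N} :=
  [set a in Aset lam S F | gaplen lam S F a == maxgap lam S F].

End Ring.

(* ceil((n - lam)/Lam) * Lam + lam, as an integer; ceil(x/d) = - floor(-x/d) *)
Definition lceil (Lam lam n : nat) : int :=
  (- divz (- (n%:Z - lam%:Z)) Lam%:Z) * Lam%:Z + lam%:Z.

Section Prob.
Variables (R : realFieldType) (N : nat).
Variables (alpha beta gamma : R) (mu nu kappa : nat -> R).

(* probability of (sender S, fanout set F) *)
Definition traffic_weight (S : 'I_N) (F : {set 'I_N}) : R :=
  alpha * (N%:R)^-1 *
    (if (S \notin F) && (0 < #|F|)%N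
     then mu #|F| / ('C(N.-1, #|F|))%:R else 0)
  + beta *
    (if [&& (S != 0 :> nat), [exists x in F, x == 0 :> nat] & S \notin F]
     then (N.-1%:R)^-1 * (nu #|F| / ('C(N.-2, #|F|.-1))%:R) else 0)
  + gamma *
    (if [&& (S == 0 :> nat), S \notin F & (0 < #|F|)%N]
     then kappa #|F| / ('C(N.-1, #|F|))%:R else 0).

Definition Outcome := ('I_N * {set 'I_N} * 'I_N)%type.

(* outcome (S, F, G) where G = start node of the chosen largest gap,
   chosen uniformly among ties *)
Definition outcome_weight (Lam lam : nat) (w : Outcome) : R :=
  let: (Sd, F, G) := w in
  traffic_weight Sd F *
    (if G \in largest_gaps Lam lam Sd F
     then (#|largest_gaps Lam lam Sd F|%:R)^-1 else 0).

Definition Prob (Lam lam : nat) (E : pred Outcome) : R :=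
  \sum_(w : Outcome) outcome_weight Lam lam w * (E w)%:R.

End Prob.

(* event: segment u_n (from n-1 to n, indices mod N) lies on the clockwise arc
   from S to G *)
Definition cw_event (N : nat) (n : nat) (w : Outcome N) : bool :=
  let: (Sd, F, G) := w in (0 < cwd N Sd n <= cwd N Sd G)%N.

(* event: S \in {n, ..., c-1} (mod N) and G <> S *)
Definition window_event (N : nat) (n : nat) (c : int) (w : Outcome N) : bool :=
  let: (Sd, F, G) := w in
  has (fun k : int => modz k N%:Z == (Sd : nat)%:Z)
      [seq n%:Z + i%:Z | i <- iota 0 `|c - n%:Z|%N]
  && (G != Sd).

From mathcomp Require Import all_boot all_order all_algebra.
From mathcomp Require Import zify.

Set Implicit Arguments.
Unset Strict Implicit.
Unset Printing Implicit Defensive.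
Import Order.TTheory GRing.Theory Num.Theory.

(* Let c be the first node at or after n (clockwise) homed on lam. The nodes
   n, ..., c - 1 are not homed on lam, so the start G of the chosen largest gap,
   which lies in {S} u F_lam, is never among them unless G = S. Hence the
   clockwise arc from S to G cannot end inside this window: it traverses u_c
   iff it traverses u_n or it starts inside the window and is non-empty, and
   these two cases are exclusive. Summing over outcomes gives the identity. *)

Section ClockwiseArcs.
Variable N : nat.

Lemma cwdE a b : a < N -> b < N ->
  cwd N a b = if a <= b then b - a else b + N - a.
Proof.
move=> ha hb; rewrite /cwd (modn_small hb) (modn_small ha); case: leqP => h.
  have -> : b + N - a = b - a + N by lia.
  by rewrite modnDr modn_small //; lia.
by rewrite modn_small //; lia.
Qed.

Lemma modn_lt_double c : c < N + N -> c %% N = if c < N then c else c - N.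
Proof.
move=> h; case: ifP => hc; first by rewrite modn_small.
have -> : c = c - N + N by lia.
by rewrite modnDr modn_small; lia.
Qed.

(* The nodes n, ..., c - 1 taken modulo N, for n < N and c < n + N. *)
Definition in_window (n c x : nat) : bool := (n <= x < c) || (n <= x + N < c).

Lemma cw_segment_window n c s g :
  s < N -> g < N -> n < N -> n <= c < n + N ->
  (g == s) || ~~ in_window n c g ->
  ((0 < cwd N s (c %% N) <= cwd N s g) =
     (0 < cwd N s n <= cwd N s g) || (in_window n c s && (g != s)))
  /\ ~~ ((0 < cwd N s n <= cwd N s g) && (in_window n c s && (g != s))).
Proof.
move=> hs hg hn /andP[hnc hcN] hgw.
have [c' -> hc'] : exists2 c', c %% N = c' &
    (c < N /\ c' = c) \/ (N <= c /\ c' = c - N).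
  exists (c %% N) => //; rewrite modn_lt_double; last by lia.
  by case: ifP => [?|/negbT ?]; lia.
have hc'N : c' < N by lia.
move: hgw; rewrite /in_window (cwdE hs hc'N) (cwdE hs hg) (cwdE hs hn).
do 3 case: ifP => [?|/negbT ?]; lia.
Qed.

Local Open Scope ring_scope.

Lemma window_seqE n r s : (s < N)%N -> (n < N)%N -> (r <= N)%N ->
  has (fun k : int => modz k N%:Z == s%:Z) [seq n%:Z + i%:Z | i <- iota 0 r]
  = in_window n (n + r) s.
Proof.
move=> hs hn hr; apply/hasP/idP.
- move=> [k /mapP [i hi ->]]; rewrite mem_iota add0n in hi.
  rewrite -PoszD modz_nat => /eqP [] hm.
  have := divn_eq (n + i)%N N; rewrite hm /in_window.
  have : ((n + i) %/ N < 2)%N by rewrite ltn_divLR; lia.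
  by case: ((n + i) %/ N)%N => [|[|?]] //; lia.
- rewrite /in_window => /orP [] /andP [h1 h2].
  + exists (n%:Z + (s - n)%N%:Z).
      by apply/mapP; exists (s - n)%N; rewrite // mem_iota; lia.
    by rewrite -PoszD modz_nat; apply/eqP; congr Posz; rewrite modn_small; lia.
  + exists (n%:Z + (s + N - n)%N%:Z).
      by apply/mapP; exists (s + N - n)%N; rewrite // mem_iota; lia.
    rewrite -PoszD modz_nat; apply/eqP; congr Posz.
    have -> : (n + (s + N - n) = s + N)%N by lia.
    by rewrite modnDr modn_small.
Qed.

End ClockwiseArcs.

Section NextHomedNode.
Local Open Scope ring_scope.
Variables (Lam lam : nat).
Hypothesis Lam_gt0 : (0 < Lam)%N.

Definition lceil_offset (n : nat) : nat := `|modz (lam%:Z - n%:Z) Lam%:Z|%N.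

Let lceil_offsetE n : (lceil_offset n)%:Z = modz (lam%:Z - n%:Z) Lam%:Z.
Proof. by rewrite /lceil_offset gez0_abs // modz_ge0 //; lia. Qed.

Lemma lceilE n : lceil Lam lam n = (n + lceil_offset n)%N%:Z.
Proof.
rewrite /lceil PoszD lceil_offsetE opprB.
have := divz_eq (lam%:Z - n%:Z) Lam%:Z.
by rewrite mulNr; set t := (_ * Lam%:Z); set m := (_ %% _)%Z; lia.
Qed.

Lemma lceil_offset_lt n : (lceil_offset n < Lam)%N.
Proof.
have := @ltz_pmod (lam%:Z - n%:Z) Lam%:Z; rewrite -lceil_offsetE; lia.
Qed.

Lemma not_homed_before_lceil n x :
  (n <= x < n + lceil_offset n)%N -> (x %% Lam != lam %% Lam)%N.
Proof.
move=> /andP[h1 h2]; apply/negP => /eqP hx.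
have hr := lceil_offset_lt n.
have : modz x%:Z Lam%:Z == modz lam%:Z Lam%:Z by rewrite !modz_nat hx.
rewrite eqz_mod_dvd => /dvdzP [q hq].
have e : lam%:Z - n%:Z = - q * Lam%:Z + (x - n)%N%:Z by rewrite mulNr -hq; lia.
have : modz (lam%:Z - n%:Z) Lam%:Z = (x - n)%N%:Z.
  by rewrite e modzMDl modz_small //; apply/andP; split => //; lia.
by rewrite -lceil_offsetE; lia.
Qed.

Lemma homed_notin_window N n (x : 'I_N) : (Lam %| N)%N ->
  homed Lam lam x -> ~~ in_window N n (n + lceil_offset n) x.
Proof.
move=> /eqP hLN /eqP hx; apply/negP => /orP[] /not_homed_before_lceil.
  by rewrite hx eqxx.
by rewrite -modnDmr hLN addn0 hx eqxx.
Qed.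

Lemma largest_gapsP N S F (G : 'I_N) :
  G \in largest_gaps Lam lam S F -> (G == S) || homed Lam lam G.
Proof. by rewrite !inE => /andP[/orP[-> // | /andP[_ ->]] _]; rewrite orbT. Qed.

End NextHomedNode.

Section Probability.
Local Open Scope ring_scope.
Variables (R : realFieldType) (N Lam lam : nat).
Variables (alpha beta gamma : R) (mu nu kappa : nat -> R).

Let P := @Prob R N alpha beta gamma mu nu kappa Lam lam.

Lemma Prob_disjointU (E E1 E2 : pred (Outcome N)) :
  (forall S F G, G \in largest_gaps Lam lam S F ->
     E (S, F, G) = E1 (S, F, G) || E2 (S, F, G)
     /\ ~~ (E1 (S, F, G) && E2 (S, F, G))) ->
  P E = P E1 + P E2.
Proof.
move=> hE; rewrite /P /Prob -big_split; apply: eq_bigr => -[[S F] G] _ /=.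
rewrite /outcome_weight; case: ifP => hG; last by rewrite !mulr0 !mul0r addr0.
rewrite -mulrDr; have [-> ] := hE S F G hG.
by case: (E1 _); case: (E2 _); rewrite //= ?addr0 ?add0r.
Qed.

Hypotheses (ha : 0 <= alpha) (hb : 0 <= beta) (hg : 0 <= gamma).
Hypotheses (hmu : forall l, 0 <= mu l) (hnu : forall l, 0 <= nu l)
  (hkappa : forall l, 0 <= kappa l).

Lemma traffic_weight_ge0 (S : 'I_N) (F : {set 'I_N}) :
  0 <= traffic_weight alpha beta gamma mu nu kappa S F.
Proof.
rewrite /traffic_weight; apply: addr_ge0; first apply: addr_ge0.
- apply: mulr_ge0; first by apply: mulr_ge0; rewrite // invr_ge0 ler0n.
  by case: ifP => // _; apply: divr_ge0; rewrite // ler0n.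
- apply: mulr_ge0 => //; case: ifP => // _.
  by apply: mulr_ge0; [rewrite invr_ge0 ler0n | apply: divr_ge0; rewrite // ler0n].
- apply: mulr_ge0 => //; case: ifP => // _.
  by apply: divr_ge0; rewrite // ler0n.
Qed.

Lemma Prob_ge0 E : 0 <= P E.
Proof.
apply: sumr_ge0 => -[[S F] G] _; apply: mulr_ge0; rewrite ?ler0n //.
apply: mulr_ge0; first exact: traffic_weight_ge0.
by case: ifP => // _; rewrite invr_ge0 ler0n.
Qed.

End Probability.

Local Open Scope ring_scope.

Theorem corollary3p2 (R : realFieldType) (Lam eta N : nat)
  (hLam : (0 < Lam)%N) (heta : (0 < eta)%N) (hN : N = (eta * Lam)%N)
  (alpha beta gamma : R) (mu nu kappa : nat -> R)
  (ha : 0 <= alpha) (hb : 0 <= beta) (hg : 0 <= gamma)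
  (habg : alpha + beta + gamma = 1)
  (hmu : forall l, 0 <= mu l) (hnu : forall l, 0 <= nu l)
  (hkappa : forall l, 0 <= kappa l)
  (hmu1 : \sum_(1 <= l < N) mu l = 1)
  (hnu1 : \sum_(1 <= l < N) nu l = 1)
  (hkappa1 : \sum_(1 <= l < N) kappa l = 1)
  (lam : nat) (hlam : (1 <= lam <= Lam)%N) (n : nat) (hn : (n < N)%N) :
  let P := @Prob R N alpha beta gamma mu nu kappa Lam lam in
  let c := lceil Lam lam n in
  P (cw_event n) =
    P (cw_event `|modz c N%:Z|%N) - P (window_event n c)
  /\ P (cw_event n) <= P (cw_event `|modz c N%:Z|%N).
Proof.
move=> P c.
have hr := lceil_offset_lt lam hLam n; set r := lceil_offset Lam lam n in hr *.
have hrN : (r < N)%N by rewrite hN; apply: leq_trans hr _; rewrite leq_pmull.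
have hc : `|modz c N%:Z|%N = ((n + r) %% N)%N.
  by rewrite /c (lceilE lam hLam) modz_nat.
have hcn : `|c - n%:Z|%N = r by rewrite /c (lceilE lam hLam) PoszD addrC addKr.
have split_c :
    P (cw_event `|modz c N%:Z|%N) = P (cw_event n) + P (window_event n c).
  apply: Prob_disjointU => S F G hG /=.
  rewrite hc hcn window_seqE //; last exact: ltnW.
  apply: cw_segment_window => //; first by rewrite leq_addr ltn_add2l.
  have /orP[/eqP-> | hG'] := largest_gapsP hG; first by rewrite eqxx.
  by rewrite homed_notin_window ?orbT // hN dvdn_mull.
split; first by rewrite split_c addrK.
by rewrite split_c lerDl Prob_ge0.
Qed.
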